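(* Let $G$ be a finitely generated group, and let $M$ be a sequence of probability measures on $G$ that measures index uniformly. Then the $\limsup$ in the definition of $\textup{dc}_M(G)$ is actually a limit, and $\textup{dc}_{M'}(G)=\textup{dc}_M(G)$ for every other sequence $M'$ of probability measures on $G$ that measures index uniformly. Moreover, if $G$ is amenable then $\textup{dc}_\mu(G)=\textup{dc}_M(G)$ for every finitely additive left-invariant mean $\mu$ on $G$.
   Context: A sequence $M=(\mu_n)$ of probability measures measures index uniformly if $\mu_n(xH)\to1/[G:H]$ uniformly over $x\in G$ and subgroups $H$ (with $1/[G:H]=0$ for infinite index). $\textup{dc}_M(G)=\limsup_n(\mu_n\times\mu_n)(\{(x,y):xy=yx\})$. For a finitely additive left-invariant mean $\mu$ (positive normalised left-invariant linear functional on $\ell^\infty(G)$, $\mu(X)=\int1_X\,d\mu$), $\textup{dc}_\mu(G)=\int_x\int_y1_{\{xy=yx\}}\,d\mu(x)\,d\mu(y)$. *)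

From mathcomp Require Import all_boot all_order all_algebra.
From mathcomp Require Import all_classical all_reals all_analysis.
From mathcomp Require Import finmap.
Set Implicit Arguments. Unset Strict Implicit. Unset Printing Implicit Defensive.
Import numFieldNormedType.Exports.
Import Order.TTheory GRing.Theory Num.Theory.
Local Open Scope classical_set_scope.
Local Open Scope ring_scope.

Section GroupDefs.
Variable G : groupType.
Local Notation "x * y" := (monoid.mul x y) : group_scope.
Local Notation "1" := (@monoid.one G) : group_scope.
Local Notation "x ^-1" := (monoid.inv x) : group_scope.

Definition is_subgroup (H : set G) : Prop :=
  H 1%g /\ (forall x y, H x -> H y -> H (x * y)%g) /\ (forall x, H x -> H (x^-1)%g).

Definition finitely_generated : Prop :=
  exists s : seq G, forall H : set G,
    is_subgroup H -> (forall x, x \in s -> H x) -> H = setT.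

Definition lcoset (x : G) (H : set G) : set G := [set (x * h)%g | h in H].

Definition lcosets (H : set G) : set (set G) := [set lcoset x H | x in setT].

(* 1/[G:H], with the convention 1/[G:H] = 0 when the index is infinite *)
Definition inv_index (R : realType) (H : set G) : R :=
  if `[< finite_set (lcosets H) >]
  then ((#|` fset_set (lcosets H)|)%N%:R)^-1
  else 0.

(* probability measures on the (countable, discrete) group G, given by their
   mass functions *)
Definition is_prob (R : realType) (mu : G -> R) : Prop :=
  (forall x, 0 <= mu x) /\ (\esum_(x in [set: G]) (mu x)%:E = 1%E).

Definition pmeas (R : realType) (mu : G -> R) (A : set G) : R :=
  fine (\esum_(x in A) (mu x)%:E).

Definition measures_index_uniformly (R : realType) (M : nat -> G -> R) : Prop :=
  (forall n, is_prob (M n)) /\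
  forall eps : R, 0 < eps -> exists N : nat, forall n, (N <= n)%N ->
    forall (x : G) (H : set G), is_subgroup H ->
      `| pmeas (M n) (lcoset x H) - inv_index R H | < eps.

Definition commuting_pairs : set (G * G) := [set p | (p.1 * p.2)%g = (p.2 * p.1)%g].

Definition dc_n (R : realType) (mu : G -> R) : R :=
  fine (\esum_(p in commuting_pairs) (mu p.1 * mu p.2)%:E).

Definition dc_seq (R : realType) (M : nat -> G -> R) : nat -> R :=
  fun n => dc_n (M n).

Definition dcM (R : realType) (M : nat -> G -> R) : R := limn_sup (dc_seq M).

(* means: finitely additive left-invariant means, i.e. positive normalised
   left-invariant linear functionals on l^oo(G).  A functional is given as a
   map on all functions G -> R, but all requirements only concern bounded
   functions (its values on unbounded functions are irrelevant). *)
Definition bounded_fun (R : realType) (f : G -> R) : Prop :=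
  exists C : R, forall x, `|f x| <= C.

Definition is_left_invariant_mean (R : realType) (m : (G -> R) -> R) : Prop :=
  (forall (a b : R) (f g : G -> R), bounded_fun f -> bounded_fun g ->
      m (fun x => a * f x + b * g x) = a * m f + b * m g) /\
  (forall f : G -> R, bounded_fun f -> (forall x, 0 <= f x) -> 0 <= m f) /\
  (m (fun _ => 1) = 1) /\
  (forall (g : G) (f : G -> R), bounded_fun f ->
      m (fun x => f (g * x)%g) = m f).

Definition amenable (R : realType) : Prop :=
  exists m : (G -> R) -> R, is_left_invariant_mean m.

Definition comm_ind (R : realType) (x y : G) : R :=
  if `[< (x * y)%g = (y * x)%g >] then 1 else 0.

Definition dc_mean (R : realType) (m : (G -> R) -> R) : R :=
  m (fun y => m (fun x => comm_ind R x y)).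

End GroupDefs.

From Pilot Require Import Defs.
From mathcomp Require Import all_boot all_order all_algebra.
From mathcomp Require Import all_classical all_reals all_analysis.
From mathcomp Require Import finmap lra ring.
Import numFieldNormedType.Exports.
Import Order.TTheory GRing.Theory Num.Theory.
Local Open Scope classical_set_scope.
Local Open Scope ring_scope.
Set Implicit Arguments. Unset Strict Implicit. Unset Printing Implicit Defensive.

(* Fix K.  Since a subgroup of index at most K is determined by how the
   generators permute a list of K coset representatives, a finitely generated
   group has only finitely many such subgroups, so their intersection N has
   finite index.  If y does not centralise N, then N is not contained in C(y),
   so C(y) has index > K; if y centralises N, then C(y) is the union of the
   cosets tN with t in C(y).  Consequently, for every normalised positive
   functional I on bounded functions which gives each coset xH mass within
   delta of 1/[G:H],
     I(y |-> I(1_C(y))) = sum_t I(1_tN) I(1_(C(N) /\ C(t))) + tail,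
     0 <= tail <= 1/(K+1) + delta,
   where t runs over a transversal of N.  Hence this quantity lies within
   O(delta) of [c_K, c_K + 1/(K+1)], c_K = sum_t 1/[G:N] 1/[G:C(N) /\ C(t)].
   The measures of a sequence that measures index uniformly have delta -> 0,
   and an invariant mean has delta = 0.  So every dc_M(G) is a limit, and all
   the dc_M(G) and dc_mu(G) lie in every interval [c_K, c_K + 1/(K+1)]; these
   intervals shrink to a point. *)

Lemma sumr_count (R : pzSemiRingType) (T : Type) (s : seq T) (P : pred T) :
  \sum_(t <- s) (P t)%:R = (count P s)%:R :> R.
Proof. by rewrite -natr_sum -sumn_count sumnE big_map. Qed.

Lemma sumr_const_seq (R : pzSemiRingType) (T : Type) (s : seq T) (c : R) :
  \sum_(t <- s) c = (size s)%:R * c.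
Proof. by rewrite big_const_seq count_predT iter_addr_0 mulr_natl. Qed.

Lemma indic_in {T : Type} {R : pzRingType} (A : set T) x : A x -> \1_A x = 1 :> R.
Proof. by move=> Ax; rewrite indicE mem_set. Qed.

Lemma indic_notin {T : Type} {R : pzRingType} (A : set T) x : ~ A x -> \1_A x = 0 :> R.
Proof. by move=> Ax; rewrite indicE memNset. Qed.

Lemma indicC_in {T : Type} {R : pzRingType} (A : set T) x : A x -> \1_(~` A) x = 0 :> R.
Proof. by move=> Ax; rewrite indicC /= mem_set. Qed.

Lemma indicC_notin {T : Type} {R : pzRingType} (A : set T) x : ~ A x -> \1_(~` A) x = 1 :> R.
Proof. by move=> Ax; rewrite indicC /= memNset. Qed.

Lemma indic_equiv {T : Type} {R : pzRingType} (A B : set T) x y :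
  (A x <-> B y) -> \1_A x = \1_B y :> R.
Proof.
move=> AB; rewrite !indicE (_ : x \in A = (y \in B)) //.
by apply/idP/idP => /set_mem/AB/mem_set.
Qed.

Lemma ler_distM01 (R : realFieldType) (a b q r d : R) :
  `|a - q| <= d -> `|b - r| <= d -> 0 <= b <= 1 -> 0 <= q <= 1 ->
  `|a * b - q * r| <= 2 * d.
Proof.
move=> ha hb /andP[b0 b1] /andP[q0 q1].
have -> : a * b - q * r = (a - q) * b + q * (b - r) by ring.
apply: le_trans (ler_normD _ _) _.
rewrite !normrM (ger0_norm b0) (ger0_norm q0) mulr2n mulrDl mul1r.
by apply: lerD; [apply: le_trans (ler_wpM2l _ b1) _; rewrite ?mulr1|
  apply: le_trans (ler_wpM2r _ q1) _; rewrite ?mul1r].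
Qed.

Lemma esumZl (R : realType) (T : choiceType) (A : set T) (r : R) (a : T -> \bar R) :
  0 <= r -> (forall t, 0 <= a t)%E ->
  (\esum_(i in A) (r%:E * a i) = r%:E * \esum_(i in A) a i)%E.
Proof.
move=> r0 a0; rewrite /esum -ereal_supZl //; last first.
  by apply/set0P; exists 0%E; exists set0; [exact: fsets_set0|rewrite fsbig_set0].
congr ereal_sup; rewrite image_comp; apply: eq_imagel => F _ /=.
by rewrite ge0_mule_fsumr.
Qed.

Section Subgroups.
Variable G : groupType.
Implicit Types (A H : set G) (x y g : G).

Lemma subgroup1 H : is_subgroup H -> H 1%g.
Proof. by case. Qed.

Lemma subgroupM H x y : is_subgroup H -> H x -> H y -> H (x * y)%g.
Proof. by case=> _ [+ _]; apply. Qed.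

Lemma subgroupV H x : is_subgroup H -> H x -> H (x^-1)%g.
Proof. by case=> _ [_ +]; apply. Qed.

Lemma subgroupVE H x : is_subgroup H -> H (x^-1)%g <-> H x.
Proof. by move=> sH; split=> /(subgroupV sH) //; rewrite invgK. Qed.

Lemma subgroupMr H x y : is_subgroup H -> H y -> H (x * y)%g <-> H x.
Proof.
move=> sH Hy; split=> [Hxy|Hx]; last exact: subgroupM.
by rewrite -(mulgK y x); apply: subgroupM => //; apply: subgroupV.
Qed.

Lemma subgroupMl H x y : is_subgroup H -> H x -> H (x * y)%g <-> H y.
Proof.
move=> sH Hx; split=> [Hxy|Hy]; last exact: subgroupM.
by rewrite -(mulKg x y); apply: subgroupM => //; apply: subgroupV.
Qed.

Lemma subgroupT : is_subgroup [set: G].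
Proof. by []. Qed.

Lemma subgroupI H1 H2 : is_subgroup H1 -> is_subgroup H2 -> is_subgroup (H1 `&` H2).
Proof.
move=> s1 s2; split; first by split; apply: subgroup1.
by split=> [x y [? ?] [? ?]|x [? ?]]; split; by [apply: subgroupM|apply: subgroupV].
Qed.

Definition centralizer1 y : set G := [set x | commute x y].

Definition centralizer A : set G := [set y | forall a, A a -> commute a y].

Lemma subgroup_centralizer1 y : is_subgroup (centralizer1 y).
Proof.
split; first exact/commute_sym/commute1.
split=> [a b ha hb|a ha]; apply: commute_sym; first exact: commuteM.
exact: commuteV.
Qed.

Lemma subgroup_centralizer A : is_subgroup (centralizer A).
Proof.
split; first by move=> a _; apply: commute1.
split=> [a b ha hb n An|a ha n An]; first exact: commuteM (ha n An) (hb n An).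
exact: commuteV (ha n An).
Qed.

Lemma lcosetE x H g : lcoset x H g <-> H (x^-1 * g)%g.
Proof.
split=> [[h Hh <-]|Hg]; first by rewrite mulKg.
by exists (x^-1 * g)%g => //; rewrite mulVKg.
Qed.

Lemma lcoset1 H : lcoset 1%g H = H.
Proof. by apply/funext=> g; apply/propext; rewrite lcosetE invg1 mul1g. Qed.

Lemma lcosetI x H1 H2 : lcoset x (H1 `&` H2) = lcoset x H1 `&` lcoset x H2.
Proof. by apply/funext=> g; apply/propext; rewrite /setI /= !lcosetE. Qed.

Lemma lcoset_refl H g : is_subgroup H -> lcoset g H g.
Proof. by move=> sH; apply/lcosetE; rewrite mulVg; apply: subgroup1. Qed.

Lemma lcoset_eq H x g : is_subgroup H -> lcoset x H g -> lcoset x H = lcoset g H.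
Proof.
move=> sH /lcosetE Hg; apply/funext => z; apply/propext; rewrite !lcosetE.
by rewrite -{1}(mulVKg g z) mulgA (subgroupMl _ sH).
Qed.

Lemma lcoset_memE H x y z : is_subgroup H -> lcoset y H z ->
  lcoset x H z <-> lcoset x H y.
Proof.
move=> sH /lcosetE yz; rewrite !lcosetE.
by rewrite -{1}(mulVKg y z) mulgA (subgroupMr _ sH yz).
Qed.

Lemma lcosetMl H g x z : lcoset x H z -> lcoset (g * x)%g H (g * z)%g.
Proof. by rewrite !lcosetE invgM -mulgA mulKg. Qed.

Lemma lcosetVl H g x y : is_subgroup H ->
  lcoset x H (g^-1 * y)%g <-> lcoset y H (g * x)%g.
Proof.
move=> sH; rewrite !lcosetE -(subgroupVE _ sH).
by rewrite !invgM !invgK mulgA.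
Qed.

Definition lcoset_cover H (xs : seq G) := forall g, exists2 x, x \in xs & lcoset x H g.

Definition lcoset_transversal H (ts : seq G) :=
  forall g, count (fun t => g \in lcoset t H) ts = 1%N.

Lemma lcoset_coverI H1 H2 xs1 xs2 : is_subgroup H1 -> is_subgroup H2 ->
  lcoset_cover H1 xs1 -> lcoset_cover H2 xs2 -> exists zs, lcoset_cover (H1 `&` H2) zs.
Proof.
move=> s1 s2 c1 c2.
pose z (p : G * G) := xget 1%g (lcoset p.1 H1 `&` lcoset p.2 H2).
exists [seq z p | p <- [seq (a, b) | a <- xs1, b <- xs2]] => g.
have [a a1 ga] := c1 g; have [b b2 gb] := c2 g.
exists (z (a, b)); first by apply: map_f; apply: allpairs_f.
have [za zb] : (lcoset a H1 `&` lcoset b H2) (z (a, b)) by apply: xgetI (conj ga gb).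
by rewrite lcosetI -(lcoset_eq s1 za) -(lcoset_eq s2 zb).
Qed.

(* [xget] only sees the set [lcoset x H], so equal cosets get equal
   representatives. *)
Definition lcoset_rep H x : G := xget 1%g (lcoset x H).

Lemma lcoset_transversal_undup H xs : is_subgroup H -> lcoset_cover H xs ->
  lcoset_transversal H (undup [seq lcoset_rep H x | x <- xs]).
Proof.
move=> sH cH g.
have rep_in x : lcoset x H (lcoset_rep H x) by apply: xgetI (lcoset_refl x sH).
have rep_eq x : lcoset x H g -> lcoset_rep H x = lcoset_rep H g.
  by move=> /(lcoset_eq sH) xg; rewrite /lcoset_rep xg.
have rep_coset x : lcoset (lcoset_rep H x) H = lcoset x H.
  by rewrite -(lcoset_eq sH (rep_in x)).
transitivity (count_mem (lcoset_rep H g) (undup [seq lcoset_rep H x | x <- xs])).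
  apply: eq_in_count => t; rewrite mem_undup => /mapP[x _ ->] /=.
  rewrite rep_coset; apply/idP/eqP => [/set_mem/rep_eq //|e].
  by apply/mem_set; rewrite -rep_coset e rep_coset; apply: lcoset_refl.
rewrite count_uniq_mem ?undup_uniq // mem_undup.
by have [x xxs gx] := cH g; rewrite -(rep_eq x gx) map_f.
Qed.
End Subgroups.

Section CosetTables.
Variables (G : groupType) (s : seq G) (K : nat).
Hypothesis gen_s : forall H : set G, is_subgroup H -> (forall x, x \in s -> H x) -> H = setT.

(* For K+1 listed coset representatives [X a] of a subgroup, with [X 0 = 1]:
   for each generator, the index of a representative of its product with each
   [X a], and which entries of the list represent the same coset. *)
Definition coset_table := ({ffun 'I_(size s) -> {ffun 'I_K.+1 -> 'I_K.+1}} *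
  {ffun 'I_K.+1 -> {ffun 'I_K.+1 -> bool}})%type.

Definition realizes (tb : coset_table) (H : set G) (X : 'I_K.+1 -> G) :=
  [/\ is_subgroup H, X ord0 = 1%g, (forall g, exists a, lcoset (X a) H g),
      (forall i a, lcoset (X (tb.1 i a)) H (nth 1%g s i * X a)%g) &
      (forall a b, tb.2 a b = `[< lcoset (X b) H (X a) >])].

Lemma coset_table_exists H X : is_subgroup H -> X ord0 = 1%g ->
  (forall g, exists a, lcoset (X a) H g) -> exists tb, realizes tb H X.
Proof.
move=> sH X0 cX.
have [f Hf] := @fin_all_exists _ (fun _ => 'I_K.+1)
  (fun (ia : 'I_(size s) * 'I_K.+1) b => lcoset (X b) H (nth 1%g s ia.1 * X ia.2)%g)
  (fun ia => cX _).
exists ([ffun i => [ffun a => f (i, a)]],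
        [ffun a => [ffun b => `[< lcoset (X b) H (X a) >]]]).
by split=> // [i a|a b]; rewrite !ffunE //; apply: (Hf (i, a)).
Qed.

Lemma realizes_inj tb H X H' X' : realizes tb H X -> realizes tb H' X' -> H = H'.
Proof.
move=> [sH X0 cX sX EX] [sH' X0' cX' sX' EX'].
(* The elements acting in the same way on both lists form a subgroup that
   contains the generators, hence everything; at [X 0 = 1] this says H = H'. *)
pose S := [set g : G | forall a b,
  lcoset (X b) H (g * X a)%g <-> lcoset (X' b) H' (g * X' a)%g].
have same a b : lcoset (X b) H (X a) <-> lcoset (X' b) H' (X' a).
  by apply: asbool_eq_equiv; rewrite -EX -EX'.
have S1 : S 1%g by move=> a b; rewrite !mul1g.
have SM g h : S g -> S h -> S (g * h)%g.
  move=> Sg Sh a b; have [c hc] := cX (h * X a)%g.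
  have hc' : lcoset (X' c) H' (h * X' a)%g by apply/Sh.
  rewrite -!mulgA (lcoset_memE _ sH (lcosetMl g hc)) (lcoset_memE _ sH' (lcosetMl g hc')).
  exact: Sg.
have SV g : S g -> S (g^-1)%g.
  by move=> Sg a b; rewrite !lcosetVl //; apply: Sg.
have Ss x : x \in s -> S x.
  move=> xs a b; pose i := Ordinal (etrans (index_mem x s) xs).
  have xi : x = nth 1%g s i by rewrite nth_index.
  have := sX i a; have := sX' i a; rewrite -xi => hc' hc.
  by rewrite (lcoset_memE _ sH hc) (lcoset_memE _ sH' hc').
have ST : S = setT by apply: gen_s => //; split=> //; split.
apply/funext => g; apply/propext.
have : S g by rewrite ST.
by move=> /(_ ord0 ord0); rewrite X0 X0' !mulg1 !lcoset1.
Qed.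

Lemma realized_common_subgroup (L : seq coset_table) : exists N xs,
  [/\ is_subgroup N, lcoset_cover N xs &
      forall tb, tb \in L -> forall H X, realizes tb H X -> N `<=` H].
Proof.
elim: L => [|tb L [N [xs [sN cN HN]]]].
  by exists setT, [:: 1%g]; split=> // g; exists 1%g; rewrite ?mem_head ?lcoset1.
have [[H [X rX]]|nr] := pselect (exists H X, realizes tb H X); last first.
  exists N, xs; split=> // tb'; rewrite inE => /orP[/eqP->|tbL] H' X' r'.
    by exfalso; apply: nr; exists H', X'.
  exact: HN tbL _ _ r'.
have [sH _ cX _ _] := rX.
have cH : lcoset_cover H [seq X a | a <- enum 'I_K.+1].
  by move=> g; have [a Ha] := cX g; exists (X a) => //; apply: map_f; rewrite mem_enum.
have [zs czs] := lcoset_coverI sN sH cN cH.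
exists (N `&` H), zs; split=> //; first exact: subgroupI.
move=> tb'; rewrite inE => /orP[/eqP->|tbL] H' X' r'.
  by rewrite -(realizes_inj rX r'); apply: subIsetr.
by apply: subset_trans (HN _ tbL _ _ r'); apply: subIsetl.
Qed.

End CosetTables.

Lemma fingen_small_index_core (G : groupType) (K : nat) : finitely_generated G ->
  exists (N : set G) (ts : seq G), [/\ is_subgroup N, lcoset_transversal N ts &
    forall H xs, is_subgroup H -> (size xs <= K)%N -> lcoset_cover H xs -> N `<=` H].
Proof.
move=> [s gen_s].
have [N [xs [sN cN HN]]] := realized_common_subgroup gen_s (enum {: coset_table s K}).
exists N, (undup [seq lcoset_rep N x | x <- xs]).
split=> // [|H ys sH sz cH]; first exact: lcoset_transversal_undup.
pose X (a : 'I_K.+1) := nth 1%g (1%g :: ys) a.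
have cX g : exists a, lcoset (X a) H g.
  have [y yys gy] := cH g.
  have lt : (index y (1%g :: ys) < K.+1)%N.
    by rewrite (leq_trans _ (sz : (size (1%g :: ys) <= K.+1)%N)) // index_mem inE yys orbT.
  by exists (Ordinal lt); rewrite /X /= nth_index // inE yys orbT.
have [tb rtb] := @coset_table_exists G s K H X sH (erefl _) cX.
by apply: HN rtb; rewrite mem_enum.
Qed.

Section Index.
Context {R : realType} {G : groupType}.
Implicit Types (H : set G).

Lemma inv_index_ge0 H : 0 <= inv_index R H.
Proof. by rewrite /inv_index; case: asboolP => // _; rewrite invr_ge0. Qed.

Lemma inv_index_le1 H : inv_index R H <= 1.
Proof.
rewrite /inv_index; case: asboolP => // _.
by case: (size _) => [|n]; rewrite ?invr0 // invf_le1 ?ler1n ?ltr0n.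
Qed.

Lemma lcoset_cover_of_inv_index H K : is_subgroup H ->
  K.+1%:R^-1 < inv_index R H -> exists2 xs, (size xs <= K)%N & lcoset_cover H xs.
Proof.
move=> sH; rewrite /inv_index; case: asboolP => fin; last by rewrite ltNge invr_ge0 ler0n.
set F := fset_set (lcosets H) => ltF.
have szF : (size F <= K)%N.
  move: ltF; case: (size F) => [|n]; first by rewrite invr0 ltNge invr_ge0.
  by rewrite ltf_pV2 ?posrE ?ltr0n // ltr_nat.
exists [seq xget 1%g c | c <- F]; first by rewrite size_map.
move=> g; exists (xget 1%g (lcoset g H)).
  by apply: map_f; rewrite in_fset_set //; apply/mem_set; exists g.
have gx : lcoset g H (xget 1%g (lcoset g H)) by apply: xgetI (lcoset_refl g sH).
by rewrite -(lcoset_eq sH gx); apply: lcoset_refl.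
Qed.

End Index.

Section Expectation.
Context {R : realType} {G : groupType}.
Implicit Types (A H : set G) (f : G -> R).

Definition nonneg_bounded f := exists C, forall x, 0 <= f x <= C.

Lemma nonneg_bounded_ge0 f x : nonneg_bounded f -> 0 <= f x.
Proof. by move=> [C hC]; have /andP[] := hC x. Qed.

Lemma nonneg_bounded_indic A : nonneg_bounded \1_A.
Proof. by exists 1 => x; apply/andP. Qed.

Lemma nonneg_boundedD f1 f2 : nonneg_bounded f1 -> nonneg_bounded f2 ->
  nonneg_bounded (fun x => f1 x + f2 x).
Proof.
move=> [C1 h1] [C2 h2]; exists (C1 + C2) => x.
by have /andP[? ?] := h1 x; have /andP[? ?] := h2 x; rewrite addr_ge0 ?lerD.
Qed.

Lemma nonneg_boundedZ c f : 0 <= c -> nonneg_bounded f ->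
  nonneg_bounded (fun x => c * f x).
Proof.
move=> c0 [C hC]; exists (c * C) => x; have /andP[? ?] := hC x.
by rewrite mulr_ge0 ?ler_wpM2l.
Qed.

Lemma nonneg_bounded_sum T (l : seq T) (F : T -> G -> R) :
  (forall t, nonneg_bounded (F t)) -> nonneg_bounded (fun x => \sum_(t <- l) F t x).
Proof.
move=> hF; elim: l => [|t l IH]; first by exists 0 => x; rewrite big_nil lexx.
under eq_fun do rewrite big_cons; exact: nonneg_boundedD.
Qed.

Definition is_expectation (I : (G -> R) -> R) :=
  [/\ forall f1 f2, nonneg_bounded f1 -> nonneg_bounded f2 ->
        I (fun x => f1 x + f2 x) = I f1 + I f2,
      forall c f, 0 <= c -> nonneg_bounded f -> I (fun x => c * f x) = c * I f,
      forall f, nonneg_bounded f -> 0 <= I f &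
      I (fun=> 1) = 1].

Definition measures_index_within (I : (G -> R) -> R) (delta : R) :=
  forall x H, is_subgroup H -> `|I \1_(lcoset x H) - inv_index R H| <= delta.

Section ExpectationTheory.
Variable I : (G -> R) -> R.
Hypothesis expI : is_expectation I.

Lemma expectationD f1 f2 : nonneg_bounded f1 -> nonneg_bounded f2 ->
  I (fun x => f1 x + f2 x) = I f1 + I f2.
Proof. by case: expI => + _ _ _; apply. Qed.

Lemma expectationZ c f : 0 <= c -> nonneg_bounded f -> I (fun x => c * f x) = c * I f.
Proof. by case: expI => _ + _ _; apply. Qed.

Lemma expectation_ge0 f : nonneg_bounded f -> 0 <= I f.
Proof. by case: expI => _ _ + _; apply. Qed.

Lemma expectation_cst c : 0 <= c -> I (fun=> c) = c.
Proof.
move=> c0; have [_ _ _ I1] := expI.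
have -> : (fun=> c) = (fun x : G => c * (fun=> 1) x) by apply/funext => x; rewrite mulr1.
by rewrite expectationZ // ?I1 ?mulr1 //; exists 1 => x; rewrite ler01 lexx.
Qed.

Lemma expectation_sum T (l : seq T) (F : T -> G -> R) :
  (forall t, nonneg_bounded (F t)) ->
  I (fun x => \sum_(t <- l) F t x) = \sum_(t <- l) I (F t).
Proof.
move=> hF; elim: l => [|t l IH].
  by rewrite big_nil; under eq_fun do rewrite big_nil; rewrite expectation_cst.
rewrite big_cons -IH -expectationD //; last exact: nonneg_bounded_sum.
by under eq_fun do rewrite big_cons.
Qed.

Lemma expectation_le f1 f2 : nonneg_bounded f1 -> (forall x, f1 x <= f2 x) ->
  nonneg_bounded f2 -> I f1 <= I f2.
Proof.
move=> b1 le12 [C hC].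
have b21 : nonneg_bounded (fun x => f2 x - f1 x).
  exists C => x; have /andP[_ h2] := hC x.
  by rewrite subr_ge0 le12 lerBlDr (le_trans h2) ?lerDl ?(nonneg_bounded_ge0 _ b1).
have -> : f2 = fun x => f1 x + (f2 x - f1 x) by apply/funext => x; rewrite addrC subrK.
by rewrite expectationD // lerDl expectation_ge0.
Qed.

Lemma expectation_le_cst f C : (forall x, 0 <= f x <= C) -> I f <= C.
Proof.
move=> hC; have C0 : 0 <= C by have /andP[h0 h1] := hC 1%g; apply: le_trans h1.
rewrite -[leRHS](expectation_cst C0); apply: expectation_le; first by exists C.
  by move=> x; have /andP[] := hC x.
by exists C => x; rewrite lexx C0.
Qed.

Lemma expectation_indic_le1 A : I \1_A <= 1.
Proof. by apply: expectation_le_cst => x; apply/andP. Qed.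

End ExpectationTheory.
End Expectation.

Section CommutingDecomposition.
Context {R : realType} {G : groupType}.
Implicit Types (N : set G) (x y t : G) (ts : seq G) (I : (G -> R) -> R).

Definition dc_expectation I : R := I (fun y => I \1_(centralizer1 y)).

Definition dc_approx N ts : R :=
  \sum_(t <- ts) inv_index R N * inv_index R (centralizer N `&` centralizer1 t).

Lemma sum_indic_transversal N ts x : lcoset_transversal N ts ->
  \sum_(t <- ts) \1_(lcoset t N) x = 1 :> R.
Proof. by move=> hts; rewrite (@sumr_count R _ ts (fun t => x \in lcoset t N)) hts. Qed.

Lemma centralizer1_lcoset N t x y : centralizer N y -> lcoset t N x ->
  centralizer1 y x <-> centralizer1 t y.
Proof.
move=> Ny [n Nn <-]; rewrite /centralizer1 /commute /= -mulgA (Ny n Nn) !mulgA.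
by split=> [/mulIg/esym|->].
Qed.

Lemma indic_centralizer1_transversal N ts y : lcoset_transversal N ts ->
  centralizer N y ->
  \1_(centralizer1 y) = (fun x => \sum_(t <- ts) \1_(centralizer1 t) y * \1_(lcoset t N) x)
  :> (G -> R).
Proof.
move=> hts Ny; apply/funext => x.
rewrite -[LHS]mulr1 -(sum_indic_transversal x hts) mulr_sumr.
apply: eq_bigr => t _; have [tx|ntx] := pselect (lcoset t N x).
  by rewrite (indic_in tx) !mulr1; apply: indic_equiv; exact: centralizer1_lcoset Ny tx.
by rewrite (indic_notin ntx) !mulr0.
Qed.

Section Transversal.
Variables (I : (G -> R) -> R) (N : set G) (ts : seq G).
Hypotheses (expI : is_expectation I) (hts : lcoset_transversal N ts).

Lemma expectation_indic_centralizer1 y : centralizer N y ->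
  I \1_(centralizer1 y) =
  \sum_(t <- ts) I \1_(lcoset t N) * \1_(centralizer N `&` centralizer1 t) y.
Proof.
move=> Ny; rewrite (indic_centralizer1_transversal hts Ny) expectation_sum //; last first.
  by move=> t; apply: nonneg_boundedZ => //; exact: nonneg_bounded_indic.
apply: eq_bigr => t _; rewrite expectationZ //; last exact: nonneg_bounded_indic.
by rewrite mulrC indicI /= (indic_in Ny) mul1r.
Qed.

Let tail y := \1_(~` centralizer N) y * I \1_(centralizer1 y).

Lemma nonneg_bounded_tail : nonneg_bounded tail.
Proof.
exists 1 => y; have I0 := expectation_ge0 expI (nonneg_bounded_indic (centralizer1 y)).
by rewrite /tail mulr_ge0 //= mulr_ile1 // expectation_indic_le1.
Qed.

Lemma dc_expectation_split : dc_expectation I =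
  \sum_(t <- ts) I \1_(lcoset t N) * I \1_(centralizer N `&` centralizer1 t) + I tail.
Proof.
have nb_main t : nonneg_bounded
    (fun y => I \1_(lcoset t N) * \1_(centralizer N `&` centralizer1 t) y).
  exact/nonneg_boundedZ/nonneg_bounded_indic/expectation_ge0/nonneg_bounded_indic.
rewrite /dc_expectation.
have -> : (fun y => I \1_(centralizer1 y)) = fun y =>
    \sum_(t <- ts) I \1_(lcoset t N) * \1_(centralizer N `&` centralizer1 t) y + tail y.
  apply/funext => y; rewrite /tail; have [Ny|nNy] := pselect (centralizer N y).
    by rewrite (indicC_in Ny) mul0r addr0 expectation_indic_centralizer1.
  rewrite (indicC_notin nNy) mul1r big1 ?add0r // => t _.
  by rewrite indicI /= (indic_notin nNy) mul0r mulr0.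
rewrite expectationD ?expectation_sum //;
  [|exact: nonneg_bounded_sum|exact: nonneg_bounded_tail].
congr (_ + _); apply: eq_bigr => t _; rewrite expectationZ //.
  exact: expectation_ge0 (nonneg_bounded_indic _).
exact: nonneg_bounded_indic.
Qed.

Lemma dc_expectation_bounds delta eps : is_subgroup N ->
  measures_index_within I delta -> 0 <= eps ->
  (forall y, ~ centralizer N y -> inv_index R (centralizer1 y) <= eps) ->
  dc_approx N ts - (2 * size ts).+1%:R * delta <= dc_expectation I <=
  dc_approx N ts + eps + (2 * size ts).+1%:R * delta.
Proof.
move=> sN hI eps0 small.
have near_index H : is_subgroup H -> `|I \1_H - inv_index R H| <= delta.
  by move=> sH; rewrite -{1}(lcoset1 H); apply: hI.
have delta0 : 0 <= delta := le_trans (normr_ge0 _) (near_index _ (subgroupT G)).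
have main : `|\sum_(t <- ts) I \1_(lcoset t N) * I \1_(centralizer N `&` centralizer1 t)
              - dc_approx N ts| <= (size ts)%:R * (2 * delta).
  rewrite /dc_approx -sumrB (le_trans (ler_norm_sum _ _ _)) //.
  rewrite -sumr_const_seq ler_sum // => t _.
  apply: ler_distM01; [exact: hI|apply: near_index|apply/andP; split|apply/andP; split].
  - exact/subgroupI/subgroup_centralizer1/subgroup_centralizer.
  - exact/expectation_ge0/nonneg_bounded_indic.
  - exact: expectation_indic_le1.
  - exact: inv_index_ge0.
  - exact: inv_index_le1.
have tail_le : I tail <= eps + delta.
  apply: (expectation_le_cst expI) => y.
  rewrite /tail; have [Ny|nNy] := pselect (centralizer N y).
    by rewrite (indicC_in Ny) mul0r lexx addr_ge0.
  rewrite (indicC_notin nNy) mul1r (expectation_ge0 expI (nonneg_bounded_indic _)) /=.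
  have := near_index _ (subgroup_centralizer1 y); rewrite ler_distl => /andP[_ hle].
  by apply: le_trans hle _; rewrite lerD2r; apply: small.
have tail_ge0 : 0 <= I tail := expectation_ge0 expI nonneg_bounded_tail.
have -> : (2 * size ts).+1%:R * delta = (size ts)%:R * (2 * delta) + delta.
  by rewrite -addn1 natrD natrM; ring.
move: main; rewrite dc_expectation_split ler_norml => /andP[m1 m2].
by apply/andP; split; lra.
Qed.

End Transversal.
End CommutingDecomposition.

Section Means.
Context {R : realType} {G : groupType}.
Variable m : (G -> R) -> R.
Hypothesis mean_m : is_left_invariant_mean m.

Lemma bounded_fun_nonneg (f : G -> R) : nonneg_bounded f -> Defs.bounded_fun f.
Proof. by move=> [C hC]; exists C => x; have /andP[f0 fC] := hC x; rewrite ger0_norm. Qed.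

Lemma left_invariant_mean_expectation : is_expectation m.
Proof.
case: mean_m => lin [pos [one _]]; split=> // [f1 f2 b1 b2|c f _ b|f b].
- have := lin 1 1 f1 f2 (bounded_fun_nonneg b1) (bounded_fun_nonneg b2).
  by rewrite !mul1r; under eq_fun do rewrite !mul1r.
- have := lin c 0 f f (bounded_fun_nonneg b) (bounded_fun_nonneg b).
  by rewrite mul0r addr0; under eq_fun do rewrite mul0r addr0.
- by apply: pos (bounded_fun_nonneg b) _ => x; apply: nonneg_bounded_ge0.
Qed.

Lemma mean_indic_lcoset x (A : set G) : m \1_(lcoset x A) = m \1_A.
Proof.
case: mean_m => _ [_ [_ inv]].
rewrite -(inv x^-1%g \1_A) /=; last by apply/bounded_fun_nonneg/nonneg_bounded_indic.
by congr m; apply/funext => z; apply: indic_equiv; rewrite lcosetE.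
Qed.

Lemma sum_indic_lcosets (H : set G) (B : seq (set G)) g : is_subgroup H -> uniq B ->
  (forall c, c \in B -> lcosets H c) -> \sum_(c <- B) \1_c g = (lcoset g H \in B)%:R :> R.
Proof.
move=> sH uB BH.
rewrite -(count_uniq_mem (lcoset g H) uB) -(@sumr_count R) big_seq [RHS]big_seq.
apply: eq_bigr => c cB; have [x _ <-] := BH c cB.
rewrite indicE (_ : g \in _ = (lcoset x H == lcoset g H)) //.
by apply/idP/eqP => [/set_mem/(lcoset_eq sH) //|->]; apply/mem_set/lcoset_refl.
Qed.

Lemma mean_sum_indic_lcosets (H : set G) (B : seq (set G)) :
  (forall c, c \in B -> lcosets H c) ->
  m (fun g => \sum_(c <- B) \1_c g) = (size B)%:R * m \1_H.
Proof.
move=> BH; rewrite (expectation_sum left_invariant_mean_expectation); last first.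
  by move=> c; exact: nonneg_bounded_indic.
rewrite -sumr_const_seq big_seq [RHS]big_seq; apply: eq_bigr => c cB.
by have [x _ <-] := BH c cB; apply: mean_indic_lcoset.
Qed.

Lemma mean_indic_subgroup (H : set G) : is_subgroup H -> m \1_H = inv_index R H.
Proof.
move=> sH; have expm := left_invariant_mean_expectation.
have mean_cosets (B : {fset set G}) : [set` B] `<=` lcosets H ->
    m (fun g => \sum_(c <- B) \1_c g) = (size B)%:R * m \1_H.
  by move=> BH; apply: mean_sum_indic_lcosets => c /BH.
have sum_cosets (B : {fset set G}) g : [set` B] `<=` lcosets H ->
    \sum_(c <- B) \1_c g = (lcoset g H \in B)%:R :> R.
  by move=> BH; apply: sum_indic_lcosets => //; exact: fset_uniq.
rewrite /inv_index; case: asboolP => fin.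
  set F := fset_set (lcosets H).
  have FH : [set` F] `<=` lcosets H by move=> c /=; rewrite in_fset_set // => /set_mem.
  have := mean_cosets F FH.
  have -> : (fun g => \sum_(c <- F) \1_c g) = fun _ : G => (1 : R).
    apply/funext => g; rewrite sum_cosets // in_fset_set //.
    by rewrite (_ : _ \in _) //; apply/mem_set; exists g.
  rewrite expectation_cst // => F1.
  have nz : (size F)%:R != 0 :> R.
    by apply/eqP => F0; move: F1; rewrite F0 mul0r => /eqP; rewrite oner_eq0.
  by apply: (mulfI nz); rewrite -F1 mulfV.
have ge0 : 0 <= m \1_H := expectation_ge0 expm (nonneg_bounded_indic _).
apply/eqP; rewrite eq_le ge0 andbT leNgt; apply/negP => pos.
have [B BH szB] := infinite_set_fset (Num.Def.trunc (m \1_H)^-1).+1 fin.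
have : (size B)%:R * m \1_H <= 1.
  rewrite -mean_cosets //; apply: (expectation_le_cst expm) => g.
  by rewrite sum_cosets // ler0n lern1 leq_b1.
rewrite leNgt => /negP; apply; rewrite -ltr_pdivrMr // div1r.
by apply: lt_le_trans (truncnS_gt _) _; rewrite ler_nat.
Qed.

Lemma mean_measures_index : measures_index_within m 0.
Proof.
by move=> x H sH; rewrite mean_indic_lcoset mean_indic_subgroup // subrr normr0.
Qed.

Lemma dc_meanE : dc_mean m = dc_expectation m.
Proof.
congr m; apply/funext => y; congr m; apply/funext => x.
rewrite /comm_ind; case: asboolP => h.
  by rewrite (indic_in (A := centralizer1 y) h).
by rewrite (indic_notin (A := centralizer1 y) h).
Qed.

End Means.

Section ProbabilityMeasures.
Context {R : realType} {G : groupType}.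

Definition pexpect (mu : G -> R) (f : G -> R) : R :=
  fine (\esum_(x in [set: G]) (mu x * f x)%:E).

Lemma pmeasE (mu : G -> R) (A : set G) : pmeas mu A = pexpect mu \1_A.
Proof.
rewrite /pmeas /pexpect esum_mkcond; congr fine; apply: eq_esum => x _.
by rewrite indicE; case: (x \in A); rewrite ?mulr1 ?mulr0.
Qed.

Variable mu : G -> R.
Hypothesis prob_mu : is_prob mu.

Lemma prob_ge0 x : 0 <= mu x.
Proof. by case: prob_mu. Qed.

Lemma esum_prob_cst c : 0 <= c -> (\esum_(x in [set: G]) (mu x * c)%:E = c%:E)%E.
Proof.
move=> c0; under eq_esum do rewrite mulrC EFinM.
by rewrite esumZl // ?(proj2 prob_mu) ?mule1 // => x; rewrite lee_fin prob_ge0.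
Qed.

Lemma pexpectE f : nonneg_bounded f ->
  (pexpect mu f)%:E = \esum_(x in [set: G]) (mu x * f x)%:E.
Proof.
move=> [C hC]; have C0 : 0 <= C by have /andP[f0 fC] := hC 1%g; apply: le_trans fC.
have le_C : (\esum_(x in [set: G]) (mu x * f x)%:E <= C%:E)%E.
  rewrite -(esum_prob_cst C0); apply: le_esum => x _; rewrite lee_fin.
  by have /andP[_ fC] := hC x; rewrite ler_wpM2l ?prob_ge0.
rewrite fineK // ge0_fin_numE ?(le_lt_trans le_C) ?ltry //.
by apply: esum_ge0 => x _; have /andP[f0 _] := hC x; rewrite lee_fin mulr_ge0 ?prob_ge0.
Qed.

Lemma pexpect_expectation : is_expectation (pexpect mu).
Proof.
have ge0 f x : nonneg_bounded f -> (0 <= (mu x * f x)%:E)%E.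
  by move=> b; rewrite lee_fin mulr_ge0 ?prob_ge0 ?(nonneg_bounded_ge0 _ b).
split=> [f1 f2 b1 b2|c f c0 b|f b|].
- apply: EFin_inj; rewrite EFinD !pexpectE //; last exact: nonneg_boundedD.
  under eq_esum do rewrite mulrDr EFinD.
  by rewrite esumD // => x _; apply: ge0.
- apply: EFin_inj; rewrite EFinM !pexpectE //; last exact: nonneg_boundedZ.
  under eq_esum do rewrite mulrCA EFinM.
  by rewrite esumZl // => x; apply: ge0.
- by rewrite /pexpect fine_ge0 // esum_ge0 // => x _; apply: ge0.
- by rewrite /pexpect esum_prob_cst.
Qed.

Lemma dc_nE : dc_n mu = dc_expectation (pexpect mu).
Proof.
rewrite /dc_n /dc_expectation /pexpect; congr fine.
have -> : @commuting_pairs G = [set: G] `*`` (fun y => centralizer1 y).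
  by apply/funext => -[y x]; apply/propext; split=> [e|[_ e]]; [split|]; rewrite // e.
rewrite -(esum_esum (a := fun y x => (mu y * mu x)%:E)) => [|y x _ _]; last first.
  by rewrite lee_fin mulr_ge0 ?prob_ge0.
apply: eq_esum => y _; rewrite EFinM pexpectE; last exact: nonneg_bounded_indic.
rewrite esum_mkcond -esumZl ?prob_ge0 // => [|x]; last by rewrite lee_fin mulr_ge0 ?prob_ge0.
by apply: eq_esum => x _; rewrite indicE -EFinM; case: (x \in _); rewrite ?mulr1 ?mulr0.
Qed.

End ProbabilityMeasures.

Lemma measures_index_uniformly_near (R : realType) (G : groupType) (M : nat -> G -> R) :
  measures_index_uniformly M -> forall delta, 0 < delta ->
  \forall n \near \oo, measures_index_within (pexpect (M n)) delta.
Proof.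
move=> [pM unif] delta delta0; have [N0 hN0] := unif delta delta0.
by exists N0 => // n /= hn x H sH; rewrite -pmeasE; apply/ltW/hN0.
Qed.

Section Brackets.
Variable R : realType.
Implicit Types (c : nat -> R) (a b : R).

Definition brackets c a := forall K, c K <= a <= c K + K.+1%:R^-1.

Lemma exists_natSinv_lt (e : R) : 0 < e -> exists K : nat, K.+1%:R^-1 < e.
Proof.
move=> e0; have [K _ hK] := near_infty_natSinv_lt (PosNum e0).
by exists K; apply: hK => /=.
Qed.

Lemma brackets_eq c a b : brackets c a -> brackets c b -> a = b.
Proof.
move=> ha hb; apply/eqP; rewrite -subr_eq0 -normr_le0; apply/ler_addgt0Pr => e e0.
have [K hK] := exists_natSinv_lt e0; have := ha K; have := hb K.
set d := K.+1%:R^-1 in hK *.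
by rewrite add0r ler_norml => /andP[? ?] /andP[? ?]; apply/andP; split; lra.
Qed.

Lemma cvgn_brackets (u : nat -> R) c :
  (forall K e, 0 < e -> \forall n \near \oo, c K - e <= u n <= c K + K.+1%:R^-1 + e) ->
  cvgn u /\ brackets c (limn u).
Proof.
move=> hu.
have cu : cvgn u.
  apply: cauchy_cvg; apply: cauchy_exP => e e0.
  have [K hK] := exists_natSinv_lt (divr_gt0 e0 (ltr0n _ 2)).
  exists (c K + K.+1%:R^-1 / 2).
  apply: filterS (hu K (e / 4) (divr_gt0 e0 (ltr0n _ 4))) => n /andP[h1 h2].
  have : 0 <= K.+1%:R^-1 :> R by rewrite invr_ge0.
  set d := K.+1%:R^-1 in hK h1 h2 *.
  by rewrite -ball_normE /ball_ /= ltr_norml => ?; apply/andP; split; lra.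
split=> // K; apply/andP; split; apply/ler_addgt0Pr => e e0.
  by rewrite -lerBlDr; apply: limr_ge cu _; apply: filterS (hu K e e0) => n /andP[].
by apply: limr_le cu _; apply: filterS (hu K e e0) => n /andP[].
Qed.

End Brackets.

Section CommutingProbability.
Context {R : realType} {G : groupType}.
Implicit Types (N : set G) (ts : seq G) (M : nat -> G -> R).

Lemma fingen_centralizer_core K : finitely_generated G ->
  exists N ts, [/\ is_subgroup N, lcoset_transversal N ts &
    forall y, ~ centralizer N y -> inv_index R (centralizer1 y) <= K.+1%:R^-1].
Proof.
move=> fg; have [N [ts [sN hts HN]]] := fingen_small_index_core K fg.
exists N, ts; split=> // y nNy; rewrite leNgt; apply/negP.
move=> /(lcoset_cover_of_inv_index (subgroup_centralizer1 y)) [xs sz cv].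
by apply: nNy => n Nn; apply: HN (subgroup_centralizer1 y) sz cv n Nn.
Qed.

Section Core.
Variables (N : set G) (ts : seq G) (eps : R).
Hypotheses (sN : is_subgroup N) (hts : lcoset_transversal N ts) (eps0 : 0 <= eps).
Hypothesis small : forall y, ~ centralizer N y -> inv_index R (centralizer1 y) <= eps.

Lemma dc_seq_near M : measures_index_uniformly M -> forall e, 0 < e ->
  \forall n \near \oo, dc_approx N ts - e <= dc_seq M n <= dc_approx N ts + eps + e.
Proof.
move=> hM e e0; pose delta := e / (2 * size ts).+1%:R.
have delta0 : 0 < delta by rewrite divr_gt0.
have eE : (2 * size ts).+1%:R * delta = e by rewrite mulrC divfK // pnatr_eq0.
apply: filterS (measures_index_uniformly_near hM delta0) => n hn.
have prob_n := proj1 hM n.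
rewrite /dc_seq (dc_nE prob_n) -eE.
exact: dc_expectation_bounds (pexpect_expectation prob_n) hts _ _ sN hn eps0 small.
Qed.

Lemma dc_mean_bounds (m : (G -> R) -> R) : is_left_invariant_mean m ->
  dc_approx N ts <= dc_mean m <= dc_approx N ts + eps.
Proof.
move=> hm; have := dc_expectation_bounds (left_invariant_mean_expectation hm) hts
  sN (mean_measures_index hm) eps0 small.
by rewrite mulr0 subr0 addr0 dc_meanE.
Qed.

End Core.
End CommutingProbability.

Theorem theorem1p19 (R : realType) (G : groupType) (M : nat -> G -> R) :
  finitely_generated G ->
  measures_index_uniformly M ->
  [/\ dc_seq M @ \oo --> dcM M,
      (forall M' : nat -> G -> R, measures_index_uniformly M' -> dcM M' = dcM M)
    & (amenable G R ->
       forall m : (G -> R) -> R, is_left_invariant_mean m -> dc_mean m = dcM M)].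
Proof.
move=> fg hM.
have natSinv_ge0 K : 0 <= K.+1%:R^-1 :> R by rewrite invr_ge0.
have core K : exists p : set G * seq G,
    [/\ is_subgroup p.1, lcoset_transversal p.1 p.2 &
      forall y, ~ centralizer p.1 y -> inv_index R (centralizer1 y) <= K.+1%:R^-1].
  by have [N [ts hN]] := fingen_centralizer_core (R := R) K fg; exists (N, ts).
have [D hD] := choice core.
pose c K : R := dc_approx (D K).1 (D K).2.
have dc_lim (M' : nat -> G -> R) : measures_index_uniformly M' ->
    dc_seq M' @ \oo --> dcM M' /\ brackets c (dcM M').
  move=> hM'; have [cu bc] : cvgn (dc_seq M') /\ brackets c (limn (dc_seq M')).
    apply: cvgn_brackets => K; have [sN hts small] := hD K.
    exact: dc_seq_near sN hts (natSinv_ge0 K) small M' hM'.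
  by rewrite /dcM (cvg_limn_inf_sup cu).2.
have [cvM bM] := dc_lim M hM.
split=> // [M' hM'|_ m hm]; first exact: brackets_eq (dc_lim M' hM').2 bM.
apply: brackets_eq bM => K; have [sN hts small] := hD K.
exact: dc_mean_bounds sN hts (natSinv_ge0 K) small m hm.
Qed.
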